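(* Consider the continuous-time partial duplication graph $(\Gamma_t)_{t\geq0}$ with parameter $p\in(0,1]$, started from a fixed connected graph $\Gamma_0$ with $n_0>1$ vertices, with the tracked vertex process $(V_t)_{t\geq0}$ and the uniform vertex process $(U_t)_{t\geq0}$ defined below. For every $\varepsilon>0$ there exists $v_\varepsilon$ such that for all vertex labels $v\geq v_\varepsilon$ and all $t>0$, $$1\leq\frac{\mathbb P(V_t=v)}{\mathbb P(U_t=v)}\leq 1+\varepsilon.$$
   Context: Continuous-time model: each vertex duplicates at the times of an independent rate-$1$ Poisson process; when vertex $u$ duplicates, a new vertex is added and joined to each current neighbour of $u$ independently with probability $p$ (and to nothing else). Vertices of $\Gamma_0$ are labelled $1,\dots,n_0$ and later vertices are labelled $n_0+1,n_0+2,\dots$ in order of arrival; $N_t$ is the number of vertices at time $t$. Tracked vertex: $V_0$ is uniform on the vertices of $\Gamma_0$, and $V$ jumps at time $t$ exactly when the vertex $V_{t-}$ duplicates, moving to the newly created vertex. Uniform vertex process: $U_0$ is uniform on the vertices of $\Gamma_0$, and each time a vertex is added, $U$ moves to a vertex chosen uniformly at random from the vertices of the new graph, so that $\mathbb P(U_t=v\mid N_t=n)=1/n$ for $v\leq n$. *)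

From Stdlib Require Import Reals Relations.
From Coquelicot Require Import Coquelicot.
Open Scope R_scope.

Definition simple_graph (n0 : nat) (adj : nat -> nat -> Prop) : Prop :=
  (forall u v, adj u v -> (1 <= u <= n0)%nat /\ (1 <= v <= n0)%nat) /\
  (forall u v, adj u v -> adj v u) /\
  (forall u, ~ adj u u).

Definition graph_connected (n0 : nat) (adj : nat -> nat -> Prop) : Prop :=
  forall u v, (1 <= u <= n0)%nat -> (1 <= v <= n0)%nat ->
    clos_refl_trans nat adj u v.

(* The continuous-time process, built as a jump chain + holding times.  *)
(* After k jumps (duplication events) there are n0+k vertices; every    *)
(* vertex duplicates at rate 1, so the total jump rate is n0+k, and the *)
(* duplicating vertex is uniform among the n0+k current vertices.       *)
(* Edges never influence the vertex labels, N_t, V_t or U_t.            *)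

(* q n0 k v = P(tracked vertex has label v after k jumps). *)
Fixpoint tracked_jump (n0 k v : nat) : R :=
  match k with
  | O => if andb (Nat.leb 1 v) (Nat.leb v n0) then / INR n0 else 0
  | S k' =>
      let n := (n0 + k')%nat in
      if Nat.leb v n then
        (* the duplicating vertex is not V (prob 1 - 1/n): V stays *)
        tracked_jump n0 k' v * (1 - / INR n)
      else if Nat.eqb v (S n) then
        (* the duplicating vertex is V (prob 1/n): V moves to new vertex n+1 *)
        sum_f_R0 (fun u => tracked_jump n0 k' u * / INR n) n
      else 0
  end.

Definition uniform_jump (n0 k v : nat) : R :=
  if andb (Nat.leb 1 v) (Nat.leb v (n0 + k)) then / INR (n0 + k) else 0.

Definition jump_rate (n0 k : nat) : R := INR (n0 + k).

(* jump_cdf n0 k t = P(T_k <= t), where T_k = E_0 + ... + E_{k-1} is the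
   time of the k-th jump, with E_j ~ Exp(n0 + j) independent.
   Defined by convolution: T_{k+1} = T_k + E_k. *)
Fixpoint jump_cdf (n0 k : nat) (t : R) : R :=
  match k with
  | O => if Rle_dec 0 t then 1 else 0
  | S k' =>
      if Rle_dec 0 t then
        RInt (fun s => jump_rate n0 k' * exp (- (jump_rate n0 k' * s))
                       * jump_cdf n0 k' (t - s)) 0 t
      else 0
  end.

(* P(exactly k jumps by time t) = P(T_k <= t < T_{k+1}). *)
Definition njumps_prob (n0 k : nat) (t : R) : R :=
  jump_cdf n0 k t - jump_cdf n0 (S k) t.

Definition PV (n0 : nat) (t : R) (v : nat) : R :=
  Series (fun k => tracked_jump n0 k v * njumps_prob n0 k t).

Definition PU (n0 : nat) (t : R) (v : nat) : R :=
  Series (fun k => uniform_jump n0 k v * njumps_prob n0 k t).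

From Stdlib Require Import Reals Relations Lia Lra.
From Coquelicot Require Import Coquelicot.
Open Scope R_scope.

(* Condition on the number k of duplications up to time t: P(V_t = v) and P(U_t = v) are
   mixtures over k with the same weights P(k jumps by time t).  A label v > n0 is created
   at jump v - n0; the tracked vertex moves there with probability 1/(v-1) and afterwards
   stays with probability 1 - 1/m at a jump from m vertices, so after k jumps it sits at v
   with probability 1/(n0+k-1), against 1/(n0+k) for the uniform vertex.  The termwise
   ratio (n0+k)/(n0+k-1) lies in [1, v/(v-1)], hence so does the ratio of the mixtures.
   The analytic work only shows that the weights, defined by the convolution recursion
   for the jump times, are positive and summable. *)

Lemma tracked_jump_0 n0 v : tracked_jump n0 0 v =
  if andb (Nat.leb 1 v) (Nat.leb v n0) then / INR n0 else 0.
Proof. reflexivity. Qed.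

Lemma tracked_jump_S n0 k v : tracked_jump n0 (S k) v =
  if Nat.leb v (n0 + k) then tracked_jump n0 k v * (1 - / INR (n0 + k))
  else if Nat.eqb v (S (n0 + k)) then
    sum_f_R0 (fun u => tracked_jump n0 k u * / INR (n0 + k)) (n0 + k)
  else 0.
Proof. reflexivity. Qed.

Lemma tracked_jump_beyond n0 k v : (n0 + k < v)%nat -> tracked_jump n0 k v = 0.
Proof.
  intros Hv. destruct k as [|k].
  - rewrite tracked_jump_0, (proj2 (Nat.leb_gt v n0)) by lia.
    now rewrite Bool.andb_false_r.
  - rewrite tracked_jump_S, (proj2 (Nat.leb_gt v (n0 + k))) by lia.
    now rewrite (proj2 (Nat.eqb_neq v (S (n0 + k)))) by lia.
Qed.

Lemma sum_tracked_jump_0 n0 m : (m <= n0)%nat ->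
  sum_f_R0 (tracked_jump n0 0) m = INR m / INR n0.
Proof.
  induction m as [|m IH]; intros Hm.
  - simpl. unfold Rdiv. ring.
  - rewrite tech5, IH, tracked_jump_0 by lia.
    rewrite (proj2 (Nat.leb_le 1 (S m))), (proj2 (Nat.leb_le (S m) n0)) by lia.
    rewrite S_INR. simpl. unfold Rdiv. ring.
Qed.

Lemma sum_tracked_jump n0 k : (1 <= n0)%nat ->
  sum_f_R0 (tracked_jump n0 k) (n0 + k) = 1.
Proof.
  intros Hn0. induction k as [|k IH].
  - rewrite Nat.add_0_r, sum_tracked_jump_0 by lia.
    field. apply not_0_INR. lia.
  - assert (Hm : INR (n0 + k) <> 0) by (apply not_0_INR; lia).
    rewrite Nat.add_succ_r, tech5.
    rewrite (sum_eq _ (fun u => tracked_jump n0 k u * (1 - / INR (n0 + k)))).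
    2: { intros u Hu. rewrite tracked_jump_S.
         now rewrite (proj2 (Nat.leb_le u (n0 + k))) by lia. }
    rewrite tracked_jump_S, (proj2 (Nat.leb_gt (S (n0 + k)) (n0 + k))) by lia.
    rewrite Nat.eqb_refl, <- !scal_sum, IH.
    field. exact Hm.
Qed.

Lemma tracked_jump_new_vertex n0 k v : (1 <= n0)%nat -> (n0 < v <= n0 + k)%nat ->
  tracked_jump n0 k v = / (INR (n0 + k) - 1).
Proof.
  intros Hn0. induction k as [|k IH]; intros Hv; [lia|].
  assert (Hm : 1 <= INR (n0 + k)) by (apply (le_INR 1); lia).
  rewrite Nat.add_succ_r, S_INR, tracked_jump_S.
  destruct (Nat.leb_spec v (n0 + k)) as [Hle|Hgt].
  - assert (Hm2 : 2 <= INR (n0 + k)) by (apply (le_INR 2); lia).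
    rewrite IH by lia. field. lra.
  - rewrite (proj2 (Nat.eqb_eq v (S (n0 + k)))) by lia.
    rewrite <- scal_sum, sum_tracked_jump by exact Hn0.
    field. lra.
Qed.

Lemma uniform_jump_in n0 k v : (1 <= v <= n0 + k)%nat ->
  uniform_jump n0 k v = / INR (n0 + k).
Proof.
  intros Hv. unfold uniform_jump.
  now rewrite (proj2 (Nat.leb_le 1 v)), (proj2 (Nat.leb_le v (n0 + k))) by lia.
Qed.

Lemma uniform_jump_out n0 k v : (n0 + k < v)%nat -> uniform_jump n0 k v = 0.
Proof.
  intros Hv. unfold uniform_jump.
  now rewrite (proj2 (Nat.leb_gt v (n0 + k))), Bool.andb_false_r by lia.
Qed.

Lemma uniform_jump_bounds n0 k v : (1 <= n0)%nat -> 0 <= uniform_jump n0 k v <= 1.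
Proof.
  intros Hn0. unfold uniform_jump.
  destruct (andb _ _); [|lra].
  assert (Hm : 1 <= INR (n0 + k)) by (apply (le_INR 1); lia).
  split; [apply Rlt_le, Rinv_0_lt_compat; lra|].
  rewrite <- Rinv_1. apply Rinv_le_contravar; lra.
Qed.

Lemma tracked_jump_uniform_ratio n0 k v : (1 <= n0)%nat -> (n0 < v)%nat ->
  uniform_jump n0 k v <= tracked_jump n0 k v <= (1 + / (INR v - 1)) * uniform_jump n0 k v.
Proof.
  intros Hn0 Hv. destruct (Nat.leb_spec v (n0 + k)) as [Hle|Hgt].
  - rewrite uniform_jump_in, tracked_jump_new_vertex by lia.
    assert (Hvm : INR v <= INR (n0 + k)) by (apply le_INR; lia).
    assert (Hv2 : 2 <= INR v) by (apply (le_INR 2); lia).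
    set (m := INR (n0 + k)) in *. set (x := INR v) in *.
    split; [apply Rinv_le_contravar; lra|].
    assert (Hgap : (1 + / (x - 1)) * / m - / (m - 1) = (m - x) / ((x - 1) * m * (m - 1)))
      by (field; lra).
    assert (0 <= (m - x) / ((x - 1) * m * (m - 1))).
    { apply Rdiv_le_0_compat; [lra|].
      repeat apply Rmult_lt_0_compat; lra. }
    lra.
  - rewrite uniform_jump_out, tracked_jump_beyond by lia. lra.
Qed.

Lemma continuous_Rmax_0 x : continuous (fun u => Rmax u 0) x.
Proof.
  apply (continuous_ext (fun u => (u + Rabs u) / 2)).
  - intros u. unfold Rmax, Rabs. destruct (Rle_dec u 0), (Rcase_abs u); lra.
  - apply (continuous_mult (fun u => u + Rabs u) (fun _ => / 2)).
    + apply (continuous_plus (fun u => u) Rabs); [apply continuous_id | apply continuous_Rabs].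
    + apply continuous_const.
Qed.

Lemma continuous_RInt_0 (g : R -> R) x : (forall y, continuous g y) ->
  continuous (fun b => RInt g 0 b) x.
Proof.
  intros Hg. apply (ex_derive_continuous (V := R_NormedModule)).
  exists (g x). apply (is_derive_RInt g (fun b => RInt g 0 b) 0 x); [|apply Hg].
  apply filter_forall. intros b.
  apply (RInt_correct (V := R_CompleteNormedModule)), ex_RInt_continuous. auto.
Qed.

Lemma RInt_reflect (g : R -> R) t : (forall x, continuous g x) ->
  RInt (fun s => g (t - s)) 0 t = RInt g 0 t.
Proof.
  intros Hg.
  rewrite <- (opp_RInt_swap g) by (apply ex_RInt_continuous; auto).
  replace (RInt g t 0) with (RInt g (t - 0) (t - t)) by (f_equal; ring).
  rewrite <- (RInt_comp g (fun s => t - s) (fun _ => -1)).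
  - rewrite <- (RInt_opp (V := R_CompleteNormedModule)).
    + apply RInt_ext. intros s _. cbn. ring.
    + apply ex_RInt_continuous. intros s _. cbn.
      apply (continuous_mult (fun _ => -1) (fun s => g (t - s))); [apply continuous_const|].
      apply (continuous_comp (fun s => t - s) g); [|apply Hg].
      apply (ex_derive_continuous (V := R_NormedModule)). auto_derive. auto.
  - intros; apply Hg.
  - intros x _. split; [auto_derive; auto; ring | apply continuous_const].
Qed.

Definition exp_conv (lam : R) (c : R -> R) (t : R) : R :=
  RInt (fun s => lam * exp (- (lam * s)) * c (t - s)) 0 t.

Record regular_cdf (c : R -> R) : Prop := {
  regular_cdf_continuous : forall x, continuous c x;
  regular_cdf_mono : forall x y, x <= y -> c x <= c y;
  regular_cdf_nonneg : forall x, 0 <= c x;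
  regular_cdf_pos : forall x, 0 < x -> 0 < c x }.

Lemma regular_cdf_ext (c d : R -> R) : (forall x, c x = d x) ->
  regular_cdf c -> regular_cdf d.
Proof.
  intros Hcd [Hcont Hmono Hnonneg Hpos]. split; intros; rewrite <- ?Hcd; auto.
  apply (continuous_ext c); auto.
Qed.

Lemma continuous_exp_density lam x : continuous (fun s => lam * exp (- (lam * s))) x.
Proof. apply (ex_derive_continuous (V := R_NormedModule)). auto_derive. auto. Qed.

Lemma RInt_exp_density lam t : RInt (fun s => lam * exp (- (lam * s))) 0 t = 1 - exp (- (lam * t)).
Proof.
  apply is_RInt_unique.
  replace (1 - exp (- (lam * t))) with (minus (- exp (- (lam * t))) (- exp (- (lam * 0)))).
  - apply (is_RInt_derive (V := R_CompleteNormedModule) (fun s => - exp (- (lam * s)))).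
    + intros x _. auto_derive; auto. ring.
    + intros x _. apply continuous_exp_density.
  - unfold minus, plus, opp. cbn. rewrite Rmult_0_r, Ropp_0, exp_0. ring.
Qed.

Section ExpConv.

Variables (lam : R) (c : R -> R).
Hypotheses (lam_pos : 0 < lam) (c_regular : regular_cdf c).

Let density_pos s : 0 < lam * exp (- (lam * s)).
Proof. apply Rmult_lt_0_compat; [exact lam_pos | apply exp_pos]. Qed.

Lemma continuous_exp_conv_integrand t s :
  continuous (fun s => lam * exp (- (lam * s)) * c (t - s)) s.
Proof.
  apply (continuous_mult (fun s => lam * exp (- (lam * s))) (fun s => c (t - s))).
  - apply continuous_exp_density.
  - apply (continuous_comp (fun s => t - s) c).
    + apply (ex_derive_continuous (V := R_NormedModule)). auto_derive. auto.
    + apply regular_cdf_continuous, c_regular.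
Qed.

Lemma ex_RInt_exp_conv_integrand t a b :
  ex_RInt (fun s => lam * exp (- (lam * s)) * c (t - s)) a b.
Proof.
  apply (ex_RInt_continuous (V := R_CompleteNormedModule)).
  intros s _. apply continuous_exp_conv_integrand.
Qed.

Lemma exp_conv_nonneg t : 0 <= t -> 0 <= exp_conv lam c t.
Proof.
  intros Ht. apply RInt_ge_0; [exact Ht | apply ex_RInt_exp_conv_integrand |].
  intros s _. apply Rmult_le_pos; [apply Rlt_le, density_pos | apply c_regular].
Qed.

Lemma exp_conv_pos t : 0 < t -> 0 < exp_conv lam c t.
Proof.
  intros Ht. apply RInt_gt_0; [exact Ht | |].
  - intros s Hs. apply Rmult_lt_0_compat; [apply density_pos|].
    apply c_regular. lra.
  - intros s _. apply continuous_exp_conv_integrand.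
Qed.

Lemma exp_conv_mono t1 t2 : 0 <= t1 <= t2 -> exp_conv lam c t1 <= exp_conv lam c t2.
Proof.
  intros Ht. unfold exp_conv.
  rewrite <- (RInt_Chasles (V := R_CompleteNormedModule) _ 0 t1 t2)
    by apply ex_RInt_exp_conv_integrand.
  assert (Hhead : RInt (fun s => lam * exp (- (lam * s)) * c (t1 - s)) 0 t1
               <= RInt (fun s => lam * exp (- (lam * s)) * c (t2 - s)) 0 t1).
  { apply RInt_le; [lra | apply ex_RInt_exp_conv_integrand | apply ex_RInt_exp_conv_integrand |].
    intros s _. apply Rmult_le_compat_l; [apply Rlt_le, density_pos|].
    apply c_regular. lra. }
  assert (Htail : 0 <= RInt (fun s => lam * exp (- (lam * s)) * c (t2 - s)) t1 t2).
  { apply RInt_ge_0; [lra | apply ex_RInt_exp_conv_integrand |].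
    intros s _. apply Rmult_le_pos; [apply Rlt_le, density_pos | apply c_regular]. }
  change (plus ?x ?y) with (x + y). lra.
Qed.

Lemma exp_conv_le t : 0 <= t -> exp_conv lam c t <= c t * (1 - exp (- (lam * t))).
Proof.
  intros Ht. unfold exp_conv.
  rewrite <- RInt_exp_density, <- (RInt_scal (V := R_CompleteNormedModule)).
  2: { apply (ex_RInt_continuous (V := R_CompleteNormedModule)).
       intros s _. apply continuous_exp_density. }
  apply RInt_le; [exact Ht | apply ex_RInt_exp_conv_integrand | |].
  - apply (ex_RInt_continuous (V := R_CompleteNormedModule)). intros s _.
    apply (continuous_scal_r (c t) (fun s => lam * exp (- (lam * s)))).
    apply continuous_exp_density.
  - intros s Hs. cbn. rewrite Rmult_comm.
    apply Rmult_le_compat_r; [apply Rlt_le, density_pos|].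
    apply c_regular. lra.
Qed.

Lemma exp_conv_closed_form t :
  exp_conv lam c t = lam * exp (- (lam * t)) * RInt (fun u => exp (lam * u) * c u) 0 t.
Proof.
  set (g := fun u => exp (lam * u) * c u).
  assert (Hg : forall x, continuous g x).
  { intros x. apply (continuous_mult (fun u => exp (lam * u)) c).
    - apply (ex_derive_continuous (V := R_NormedModule)). auto_derive. auto.
    - apply c_regular. }
  unfold exp_conv. rewrite <- (RInt_reflect g t Hg).
  rewrite <- (RInt_scal (V := R_CompleteNormedModule)).
  2: { apply (ex_RInt_continuous (V := R_CompleteNormedModule)). intros s _.
       apply (continuous_comp (fun s => t - s) g); [|apply Hg].
       apply (ex_derive_continuous (V := R_NormedModule)). auto_derive. auto. }
  apply RInt_ext. intros s _. unfold g. cbn.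
  replace (exp (- (lam * s))) with (exp (- (lam * t)) * exp (lam * (t - s))).
  - ring.
  - rewrite <- exp_plus. f_equal. ring.
Qed.

Lemma exp_conv_regular : regular_cdf (fun u => exp_conv lam c (Rmax u 0)).
Proof.
  split.
  - intros x.
    apply (continuous_ext (fun u => lam * exp (- (lam * Rmax u 0))
                                   * RInt (fun u => exp (lam * u) * c u) 0 (Rmax u 0))).
    { intros u. symmetry. apply exp_conv_closed_form. }
    apply (continuous_comp (fun u => Rmax u 0)
             (fun t => lam * exp (- (lam * t)) * RInt (fun u => exp (lam * u) * c u) 0 t)).
    { apply continuous_Rmax_0. }
    apply (continuous_mult (fun t => lam * exp (- (lam * t)))); [apply continuous_exp_density|].
    apply continuous_RInt_0. intros y.
    apply (continuous_mult (fun u => exp (lam * u)) c); [|apply c_regular].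
    apply (ex_derive_continuous (V := R_NormedModule)). auto_derive. auto.
  - intros x y Hxy. apply exp_conv_mono.
    split; [apply Rmax_r | apply Rle_max_compat_r, Hxy].
  - intros x. apply exp_conv_nonneg, Rmax_r.
  - intros x Hx. apply exp_conv_pos. rewrite Rmax_left; lra.
Qed.

End ExpConv.

Lemma jump_rate_pos n0 k : (1 <= n0)%nat -> 0 < jump_rate n0 k.
Proof. intros Hn0. apply lt_0_INR. lia. Qed.

Lemma jump_cdf_S n0 k t : 0 <= t ->
  jump_cdf n0 (S k) t = exp_conv (jump_rate n0 k) (fun u => jump_cdf n0 k (Rmax u 0)) t.
Proof.
  intros Ht. cbn [jump_cdf]. destruct (Rle_dec 0 t) as [_|]; [|lra].
  apply RInt_ext. intros s Hs.
  rewrite Rmin_left, Rmax_right in Hs by lra.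
  rewrite (Rmax_left (t - s)) by lra. reflexivity.
Qed.

(* [jump_cdf n0 0] is the indicator of [0 <= t]; clamping the argument at 0 makes every
   [jump_cdf n0 k] continuous on all of R, as the convolution lemmas require. *)
Lemma jump_cdf_regular n0 k : (1 <= n0)%nat ->
  regular_cdf (fun u => jump_cdf n0 k (Rmax u 0)).
Proof.
  intros Hn0. induction k as [|k IH].
  - assert (Hone : forall u, jump_cdf n0 0 (Rmax u 0) = 1).
    { intros u. cbn. destruct (Rle_dec 0 (Rmax u 0)) as [|Hneg]; [reflexivity|].
      exfalso. apply Hneg, Rmax_r. }
    split; intros; rewrite ?Hone; try lra.
    apply (continuous_ext (fun _ => 1)); [intros; now rewrite Hone | apply continuous_const].
  - apply (regular_cdf_ext
             (fun u => exp_conv (jump_rate n0 k) (fun u => jump_cdf n0 k (Rmax u 0)) (Rmax u 0))).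
    + intros u. symmetry. apply jump_cdf_S, Rmax_r.
    + apply exp_conv_regular; [apply jump_rate_pos|]; assumption.
Qed.

Lemma njumps_prob_pos n0 k t : (1 <= n0)%nat -> 0 < t -> 0 < njumps_prob n0 k t.
Proof.
  intros Hn0 Ht. unfold njumps_prob.
  pose proof (jump_cdf_regular n0 k Hn0) as Hreg.
  pose proof (regular_cdf_pos _ Hreg t Ht) as Hpos.
  cbv beta in Hpos. rewrite Rmax_left in Hpos by lra.
  rewrite jump_cdf_S by lra.
  pose proof (exp_conv_le _ _ (jump_rate_pos n0 k Hn0) Hreg t (Rlt_le _ _ Ht)) as Hle.
  cbv beta in Hle. rewrite Rmax_left in Hle by lra.
  pose proof (exp_pos (- (jump_rate n0 k * t))).
  nra.
Qed.

Lemma sum_njumps_prob n0 t N : 0 <= t ->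
  sum_f_R0 (fun k => njumps_prob n0 k t) N = 1 - jump_cdf n0 (S N) t.
Proof.
  intros Ht. induction N as [|N IH].
  - cbn [sum_f_R0]. unfold njumps_prob. cbn [jump_cdf].
    destruct (Rle_dec 0 t); [ring | lra].
  - rewrite tech5, IH. unfold njumps_prob. ring.
Qed.

Lemma ex_series_njumps_prob n0 t : (1 <= n0)%nat -> 0 < t ->
  ex_series (fun k => njumps_prob n0 k t).
Proof.
  intros Hn0 Ht.
  destruct (ex_finite_lim_seq_incr (sum_n (fun k => njumps_prob n0 k t)) 1) as [l Hl].
  - intros N. rewrite !sum_n_Reals, tech5.
    pose proof (njumps_prob_pos n0 (S N) t Hn0 Ht). lra.
  - intros N. rewrite sum_n_Reals, sum_njumps_prob by lra.
    pose proof (regular_cdf_nonneg _ (jump_cdf_regular n0 (S N) Hn0) t) as Hnonneg.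
    cbv beta in Hnonneg. rewrite Rmax_left in Hnonneg by lra. lra.
  - exists l. exact Hl.
Qed.

Lemma Series_ratio_bounds (a b : nat -> R) (C : R) (K : nat) :
  (forall k, 0 <= a k <= b k) -> (forall k, b k <= C * a k) ->
  ex_series a -> 0 < a K -> 1 <= Series b / Series a <= C.
Proof.
  intros Hab HbC Ha HaK.
  assert (HCa : ex_series (fun k => C * a k)) by (apply (ex_series_scal_l C a Ha)).
  assert (Hb : ex_series b).
  { apply (ex_series_le b (fun k => C * a k)); [|exact HCa].
    intros k. specialize (Hab k). rewrite Rabs_right; [apply HbC | lra]. }
  assert (Hpos : 0 < Series a).
  { apply (Rlt_le_trans _ (sum_f_R0 a K)).
    - destruct K as [|K]; [exact HaK|].
      rewrite tech5. pose proof (cond_pos_sum a K (fun k => proj1 (Hab k))). lra.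
    - apply sum_incr; [apply is_series_Reals, Series_correct, Ha | intros; apply Hab]. }
  assert (Hlow : Series a <= Series b) by (apply Series_le; [exact Hab | exact Hb]).
  assert (Hup : Series b <= C * Series a).
  { rewrite <- Series_scal_l. apply Series_le; [|exact HCa].
    intros k. specialize (Hab k). split; [lra | apply HbC]. }
  split.
  - apply (Rmult_le_reg_r (Series a)); [exact Hpos|].
    unfold Rdiv. rewrite Rmult_assoc, Rinv_l; lra.
  - apply (Rmult_le_reg_r (Series a)); [exact Hpos|].
    unfold Rdiv. rewrite Rmult_assoc, Rinv_l; lra.
Qed.

Theorem lemma10 (n0 : nat) (adj : nat -> nat -> Prop) (p : R) :
  (1 < n0)%nat -> 0 < p <= 1 ->
  simple_graph n0 adj -> graph_connected n0 adj ->
  forall eps : R, 0 < eps ->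
  exists veps : nat, forall (v : nat) (t : R),
    (veps <= v)%nat -> 0 < t ->
    1 <= PV n0 t v / PU n0 t v <= 1 + eps.
Proof.
  intros Hn0 _ _ _ eps Heps.
  destruct (archimed_cor1 eps Heps) as [N [HN HNpos]].
  exists (Nat.max (S n0) (S N)). intros v t Hv Ht.
  assert (Hn0' : (1 <= n0)%nat) by lia.
  assert (Hgap : / (INR v - 1) <= eps).
  { assert (HNv : INR (S N) <= INR v) by (apply le_INR; lia). rewrite S_INR in HNv.
    assert (0 < INR N) by (apply lt_0_INR; lia).
    apply Rlt_le, (Rle_lt_trans _ (/ INR N)); [apply Rinv_le_contravar|]; lra. }
  pose proof (fun k => njumps_prob_pos n0 k t Hn0' Ht) as Hw.
  pose proof (fun k => uniform_jump_bounds n0 k v Hn0') as Hunif.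
  pose proof (fun k => tracked_jump_uniform_ratio n0 k v Hn0' ltac:(lia)) as Hratio.
  apply (Series_ratio_bounds _ _ _ (v - n0)).
  - intros k. specialize (Hw k). specialize (Hunif k). specialize (Hratio k). split.
    + apply Rmult_le_pos; lra.
    + apply Rmult_le_compat_r; lra.
  - intros k. specialize (Hw k). specialize (Hunif k). specialize (Hratio k).
    rewrite <- Rmult_assoc. apply Rmult_le_compat_r; [lra|]. nra.
  - apply (ex_series_le (V := R_CompleteNormedModule) _ (fun k => njumps_prob n0 k t));
      [|now apply ex_series_njumps_prob].
    intros k. specialize (Hw k). specialize (Hunif k).
    change (Rabs (uniform_jump n0 k v * njumps_prob n0 k t) <= njumps_prob n0 k t).
    rewrite Rabs_right by (apply Rle_ge, Rmult_le_pos; lra). nra.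
  - rewrite uniform_jump_in by lia.
    apply Rmult_lt_0_compat; [apply Rinv_0_lt_compat, lt_0_INR; lia | apply Hw].
Qed.
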